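(* Let $T:[0,1]\to[0,1]$ satisfy Condition 1. Suppose the set of distinct values among its slopes is $\{p\bar\Lambda_1,\dots,p\bar\Lambda_\ell\}$ with $\bar\Lambda_1<\dots<\bar\Lambda_\ell$, where $p\in\mathbb N$ and $\bar\Lambda_1,\dots,\bar\Lambda_\ell$ are pairwise relatively prime positive integers, and the slope $p\bar\Lambda_i$ occurs with multiplicity $m_i$ among the branches. Then $T$ is quantizable.
   Context: Let $I=[0,1]$. A map $T:I\to I$ satisfies Condition 1 if there are integers $\Lambda_1,\dots,\Lambda_l\geq 2$ (the slopes, one per branch) with $\sum_{j=1}^l\Lambda_j^{-1}=1$ and $I$ is divided into consecutive intervals $I_1,\dots,I_l$ with $|I_j|=\Lambda_j^{-1}$ such that on $I_j$, $T$ is affine with slope $\Lambda_j$ mapping $I_j$ onto $I$. For $N\in\mathbb N$ let $\mathcal M$ be the partition of $I$ into $E_i=[(i-1)/N,i/N]$, $i=1,\dots,N$. A sequence of such partitions $\mathcal M_\Bbbk$ with sizes $N_\Bbbk$ satisfies Condition 2 if each $N_{\Bbbk+1}/N_\Bbbk$ is an integer greater than one and every endpoint of every $I_j$ is an endpoint of an interval of $\mathcal M_1$. With $B_\Bbbk(i,j)=|E_i\cap T^{-1}E_j|/|E_i|$, $T$ is called quantizable if there is an infinite sequence $\mathcal M_\Bbbk$ satisfying Condition 2 such that for each $\Bbbk$ there is a unitary $N_\Bbbk\times N_\Bbbk$ matrix $U_\Bbbk$ with $B_\Bbbk(j,i)=|U_\Bbbk(i,j)|^2$ for all $i,j$. 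*)

From HB Require Import structures.
From mathcomp Require Import all_boot all_order all_algebra.
From mathcomp Require Import all_classical all_reals all_analysis.
From mathcomp Require Import complex.
Set Implicit Arguments. Unset Strict Implicit. Unset Printing Implicit Defensive.
Import Order.TTheory GRing.Theory Num.Theory.
Local Open Scope classical_set_scope.
Local Open Scope ring_scope.

Definition left_end (R : realType) (l : nat) (Lam : 'I_l -> nat) (j : 'I_l) : R :=
  \sum_(k < l | (k < j)%N) ((Lam k)%:R)^-1.

(* Condition 1.  T is given as a function R -> R; it maps [0,1] into [0,1], and
   on the interior of each I_j = [a_j, a_j + 1/Lambda_j] it is the increasing
   affine map of slope Lambda_j sending I_j onto [0,1]. *)
Definition condition1 (R : realType) (T : R -> R) (l : nat) (Lam : 'I_l -> nat) : Prop :=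
  [/\ (forall j, 2 <= Lam j)%N,
      \sum_(j < l) ((Lam j)%:R)^-1 = (1 : R),
      (forall x : R, 0 <= x <= 1 -> 0 <= T x <= 1) &
      (forall (j : 'I_l) (x : R),
          @left_end R _ Lam j < x < @left_end R _ Lam j + ((Lam j)%:R)^-1 ->
          T x = (Lam j)%:R * (x - @left_end R _ Lam j))].

Definition cell (R : realType) (N : nat) (i : nat) : set R :=
  `[ (i%:R / N%:R), (i.+1%:R / N%:R) ]%classic.

Definition Bmat (R : realType) (T : R -> R) (N : nat) (i j : 'I_N) : R :=
  fine (lebesgue_measure (@cell R N i `&` T @^-1` @cell R N j)) / (1 / N%:R).

(* Condition 2 for a sequence of partition sizes (N 0 = N_1, N 1 = N_2, ...). *)
Definition condition2 (R : realType) (l : nat) (Lam : 'I_l -> nat) (N : nat -> nat) : Prop :=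
  (0 < N 0)%N /\
  (forall k, (N k %| N k.+1)%N /\ (1 < N k.+1 %/ N k)%N) /\
  (forall j : 'I_l,
     (exists m : nat, (m <= N 0)%N /\ @left_end R _ Lam j = m%:R / (N 0)%:R) /\
     (exists m : nat, (m <= N 0)%N /\
        @left_end R _ Lam j + ((Lam j)%:R)^-1 = m%:R / (N 0)%:R)).

Definition unitary_mx (R : rcfType) (n : nat) (U : 'M[R[i]]_n) : Prop :=
  U *m (map_mx Num.conj U)^T = 1%:M.

Definition quantizable (R : realType) (T : R -> R) (l : nat) (Lam : 'I_l -> nat) : Prop :=
  exists N : nat -> nat, @condition2 R _ Lam N /\
    forall k, exists U : 'M[R[i]]_(N k), unitary_mx U /\
      forall i j : 'I_(N k), (Complex (Bmat T i j) 0 : R[i]) = `|U j i| ^+ 2.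

(* Take N_k = 2^k * prod_j Lambda_j.  Each cell E_i then lies in a single branch
   I_b, which T stretches affinely over Lambda_b consecutive cells, so row i of B
   is 1/Lambda_b on one aligned block of Lambda_b columns and 0 elsewhere (the
   endpoints of E_i, where T is unconstrained, are null).  It suffices to find a
   unitary matrix whose row i lives on the same block with entries of modulus
   Lambda_b^(-1/2).  Writing a column as j = q p + s with s < p and
   c_b = Lambda_b / p, take the entry zeta_p^(g_b s) zeta_(c_b)^(h_b q): summing
   over s makes two rows orthogonal unless g_b = g_b', and summing over q then
   does unless h_b = h_b' or the blocks differ.  Labels with g_b < p, h_b < c_b
   and (g_b, h_b) determining b exist by counting: if m_i branches have slope
   p Lbar_i, then sum_i m_i / Lbar_i = p, and the coprimality of the Lbar_i forces
   Lbar_i | m_i, so class i can use m_i / Lbar_i values of g, each with Lbar_i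
   values of h. *)

From HB Require Import structures.
From mathcomp Require Import all_boot all_order all_algebra.
From mathcomp Require Import all_classical all_reals all_analysis.
From mathcomp Require Import complex.
From mathcomp Require Import cyclic separable cyclotomic.
From mathcomp Require Import ring.
Import Order.TTheory GRing.Theory Num.Theory.
Local Open Scope ring_scope.
Set Implicit Arguments. Unset Strict Implicit. Unset Printing Implicit Defensive.

Lemma sum_ord_mul (V : zmodType) m c (u : nat -> V) :
  \sum_(j < m * c) u j = \sum_(q < m) \sum_(s < c) u (q * c + s)%N.
Proof.
rewrite -(big_mkord xpredT u) big_nat_mul big_mkord; apply: eq_bigr => q _.
rewrite mulSn -{1}[(q * c)%N]add0n big_addn addnK big_mkord.
by apply: eq_bigr => s _; rewrite addnC.
Qed.

Section RootsOfUnity.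
Variable F : numClosedFieldType.
Implicit Types (z w : F) (n : nat).

Lemma prim_root_exists n : (0 < n)%N -> {z : F | n.-primitive_root z}.
Proof.
move=> n_gt0; have [rs DXn1] := closed_field_poly_normal ('X^n - 1 : {poly F}).
rewrite (monicP (monicXnsubC 1 n_gt0)) scale1r in DXn1.
have rs_roots : all n.-unity_root rs.
  by apply/allP => z; rewrite -root_prod_XsubC -DXn1.
have rs_size : (n <= size rs)%N.
  by rewrite -ltnS -(size_prod_XsubC rs id) -DXn1 size_XnsubC.
have rs_uniq : uniq rs.
  by rewrite -separable_prod_XsubC -DXn1 separable_Xn_sub_1 // pnatr_eq0 -lt0n.
apply: sigW; have /hasP[z _ z_prim] := has_prim_root n_gt0 rs_roots rs_uniq rs_size.
by exists z.
Qed.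

Definition prim_root n : F := projT1 (prim_root_exists (ltn0Sn n.-1)).

Lemma primitive_prim_root n : (0 < n)%N -> n.-primitive_root (prim_root n).
Proof. by move=> n_gt0; rewrite /prim_root; case: prim_root_exists; rewrite prednK. Qed.

Lemma norm_unity_root w n : (0 < n)%N -> w ^+ n = 1 -> `|w| = 1.
Proof.
move=> n_gt0 wn1; apply/eqP; rewrite -(pexpr_eq1 n_gt0) ?normr_ge0 //.
by rewrite -normrX wn1 normr1.
Qed.

Lemma sum_expr_unity_root w n : w ^+ n = 1 -> \sum_(t < n) w ^+ t = (w == 1)%:R * n%:R.
Proof.
move=> wn1; have [->|w_neq1] := eqVneq w 1.
  by rewrite mul1r (eq_bigr (fun=> 1)) ?sumr_const ?card_ord // => t _; rewrite expr1n.
have /esym/eqP := subrX1 w n; rewrite wn1 subrr mulf_eq0 subr_eq0 (negPf w_neq1) /=.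
by move/eqP ->; rewrite mul0r.
Qed.

Lemma unity_root_mulJ z n a b : z ^+ n = 1 -> (z ^+ a * (z ^+ b)^*) ^+ n = 1.
Proof.
move=> zn1; rewrite exprMn -rmorphXn -!exprM !(mulnC _ n) !exprM zn1.
by rewrite !expr1n rmorph1 mulr1.
Qed.

Lemma prim_root_mulJ_eq1 z n a b : n.-primitive_root z -> (a < n)%N -> (b < n)%N ->
  (z ^+ a * (z ^+ b)^* == 1) = (a == b).
Proof.
move=> z_prim a_lt b_lt; have n_gt0 : (0 < n)%N by apply: leq_ltn_trans a_lt.
have zbJ : z ^+ b * (z ^+ b)^* = 1.
  rewrite -normCK (@norm_unity_root _ n) ?expr1n //.
  by rewrite -exprM mulnC exprM (prim_expr_order z_prim) expr1n.
transitivity (z ^+ a == z ^+ b); last by rewrite (eq_prim_root_expr z_prim) !modn_small.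
apply/eqP/eqP => [|->]; last exact: zbJ.
by move/(congr1 ( *%R^~ (z ^+ b))); rewrite mul1r -mulrA [_^* * _]mulrC zbJ mulr1.
Qed.

Lemma sum_prim_root_mulJ z n a b : n.-primitive_root z -> (a < n)%N -> (b < n)%N ->
  \sum_(t < n) (z ^+ a * (z ^+ b)^*) ^+ t = (a == b)%:R * n%:R.
Proof.
move=> z_prim a_lt b_lt; rewrite sum_expr_unity_root ?(prim_root_mulJ_eq1 z_prim) //.
exact/unity_root_mulJ/prim_expr_order.
Qed.

Lemma sum_block_expr w c M r : w ^+ c = 1 -> (r < M)%N ->
  \sum_(q < M * c) ((q %/ c)%N == r)%:R * w ^+ q = (w == 1)%:R * c%:R.
Proof.
have [->|c_gt0] := posnP c; first by rewrite muln0 big_ord0 mulr0.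
move=> wc1 r_lt; rewrite (sum_ord_mul _ _ (fun q => ((q %/ c)%N == r)%:R * w ^+ q)).
rewrite (bigD1 (Ordinal r_lt)) //=.
rewrite [X in _ + X]big1 ?addr0 => [|q /negPf q_neq].
  rewrite -sum_expr_unity_root //; apply: eq_bigr => t _.
  by rewrite divnMDl // divn_small // addn0 eqxx mul1r exprD mulnC exprM wc1 expr1n mul1r.
rewrite big1 // => t _; rewrite divnMDl // divn_small // addn0.
by rewrite -val_eqE /= in q_neq; rewrite q_neq mul0r.
Qed.

Lemma sqrtC_mulJ (x : F) : 0 <= x -> sqrtC x * (sqrtC x)^* = x.
Proof. by move=> x_ge0; rewrite geC0_conj ?sqrtC_ge0 // -expr2 sqrtCK. Qed.

End RootsOfUnity.

Lemma dvdn_coprime_sum (F : numFieldType) ell (L m : 'I_ell -> nat) n :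
  (forall i, 0 < L i)%N -> (forall i j, i != j -> coprime (L i) (L j)) ->
  \sum_i (m i)%:R / (L i)%:R = n%:R :> F -> forall i, (L i %| m i)%N.
Proof.
move=> L_gt0 L_coprime sum_n i.
pose Q i := (\prod_(i' | i' != i) L i')%N.
have prodE i' : (\prod_k L k = L i' * Q i')%N by rewrite (bigD1 i').
have sum_mQ : (\sum_i' m i' * Q i' = n * \prod_k L k)%N.
  apply/eqP; rewrite -(eqr_nat F) natr_sum natrM -sum_n mulr_suml; apply/eqP.
  apply: eq_bigr => i' _; rewrite (prodE i') !natrM mulrA divfK //.
  by rewrite pnatr_eq0 -lt0n.
have L_Q : coprime (L i) (Q i).
  apply: (big_ind (coprime (L i))) => [|x y|i' i'_neq]; first exact: coprimen1.
    by rewrite coprimeMr => ->.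
  by apply: L_coprime; rewrite eq_sym.
rewrite -(Gauss_dvdr _ L_Q) mulnC.
have : (L i %| \sum_i' m i' * Q i')%N by rewrite sum_mQ (prodE i) dvdn_mull // dvdn_mulr.
rewrite (bigD1 i) //= dvdn_addl // dvdn_sum // => i' i'_neq.
by rewrite dvdn_mull // /Q (bigD1 i) 1?eq_sym //= dvdn_mulr.
Qed.

Lemma class_labelling l ell (cls : 'I_l -> 'I_ell) (c : 'I_ell -> nat) p :
  (forall i, 0 < c i)%N -> (forall i, c i %| #|[pred b | cls b == i]|)%N ->
  (\sum_i #|[pred b | cls b == i]| %/ c i)%N = p ->
  exists g h : 'I_l -> nat,
    [/\ forall b, (g b < p)%N, forall b, (h b < c (cls b))%N &
        forall b b', g b = g b' -> cls b = cls b' /\ (h b = h b' -> b = b')].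
Proof.
move=> c_gt0 c_dvd sum_p.
pose pos b := index b (enum [pred b' | cls b' == cls b]).
have pos_lt b : (pos b < #|[pred b' | cls b' == cls b]|)%N.
  by rewrite cardE index_mem mem_enum inE.
have slot_lt b : (pos b %/ c (cls b) < #|[pred b' | cls b' == cls b]| %/ c (cls b))%N.
  by rewrite ltn_divLR // divnK.
pose slot b :=
  @tagnat.Rank _ (fun i => #|[pred b | cls b == i]| %/ c i)%N _ (Ordinal (slot_lt b)).
exists (fun b => val (slot b)), (fun b => pos b %% c (cls b))%N; split.
- by move=> b; rewrite -sum_p ltn_ord.
- by move=> b; rewrite ltn_pmod.
move=> b b' /eqP; rewrite tagnat.eq_Rank /= => /andP[/eqP cls_eq slot_eq]; split => // h_eq.
have pos_eq : pos b = pos b'.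
  rewrite (divn_eq (pos b) (c (cls b))) (divn_eq (pos b') (c (cls b'))).
  by rewrite (eqP slot_eq) h_eq -cls_eq.
have in_class b'' : cls b'' = cls b -> b'' \in enum [pred b0 | cls b0 == cls b].
  by move=> cls_b''; rewrite mem_enum inE cls_b''.
move: pos_eq; rewrite /pos -cls_eq.
exact: index_inj (in_class b erefl) (in_class b' (esym cls_eq)).
Qed.

Lemma slope_labelling (F : numFieldType) l (Lam : 'I_l -> nat) p ell
    (Lbar : 'I_ell -> nat) :
  \sum_b ((Lam b)%:R)^-1 = 1 :> F -> (0 < p)%N -> (forall i, 0 < Lbar i)%N ->
  (forall i j, i != j -> coprime (Lbar i) (Lbar j)) ->
  (forall b, exists i, Lam b = (p * Lbar i)%N) ->
  exists g h : 'I_l -> nat,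
    [/\ forall b, (g b < p)%N, forall b, (h b < Lam b %/ p)%N &
        forall b b', g b = g b' -> Lam b = Lam b' /\ (h b = h b' -> b = b')].
Proof.
move=> sum1 p_gt0 Lbar_gt0 Lbar_coprime /fin_all_exists[cls Lam_cls].
pose m i := #|[pred b | cls b == i]|.
have sum_p : \sum_i (m i)%:R / (Lbar i)%:R = p%:R :> F.
  transitivity (p%:R * \sum_b ((Lam b)%:R)^-1 : F); last by rewrite sum1 mulr1.
  rewrite (partition_big cls xpredT) //= mulr_sumr; apply: eq_bigr => i _.
  rewrite (eq_bigr (fun=> ((p * Lbar i)%:R)^-1)) => [|b /eqP <-]; last by rewrite Lam_cls.
  rewrite (eq_bigl [pred b | cls b == i]) // sumr_const -/(m i) -mulr_natr natrM.
  by field; rewrite !pnatr_eq0 -!lt0n p_gt0 Lbar_gt0.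
have Lbar_dvd := dvdn_coprime_sum Lbar_gt0 Lbar_coprime sum_p.
have sum_slots : (\sum_i m i %/ Lbar i)%N = p.
  apply/eqP; rewrite -(eqr_nat F) natr_sum -sum_p; apply/eqP/eq_bigr => i _.
  exact: natf_div.
have [g [h [g_lt h_lt labelled]]] := class_labelling Lbar_gt0 Lbar_dvd sum_slots.
exists g, h; split => // [b|b b' /labelled[cls_eq h_inj]]; first by rewrite Lam_cls mulKn.
by rewrite !Lam_cls cls_eq.
Qed.

Section BranchRows.
Variables (F : numClosedFieldType) (l : nat) (Lam : 'I_l -> nat) (p N : nat).
Variables (g h : 'I_l -> nat).
Hypotheses (p_gt0 : (0 < p)%N) (p_dvd : forall b, (p %| Lam b)%N).
Hypotheses (Lam_gt0 : forall b, (0 < Lam b)%N) (Lam_dvdN : forall b, (Lam b %| N)%N).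
Hypotheses (g_lt : forall b, (g b < p)%N) (h_lt : forall b, (h b < Lam b %/ p)%N).
Hypothesis labelling :
  forall b b', g b = g b' -> Lam b = Lam b' /\ (h b = h b' -> b = b').

Local Notation zeta n := (prim_root F n).
Local Notation width b := (Lam b %/ p)%N.

Definition phase b j : F := zeta p ^+ (g b * j) * zeta (width b) ^+ (h b * (j %/ p)).

Definition branch_row b r j : F :=
  ((j %/ Lam b)%N == r)%:R * phase b j / sqrtC (Lam b)%:R.

Lemma width_gt0 b : (0 < width b)%N.
Proof. by rewrite divn_gt0 // dvdn_leq. Qed.

Lemma Lam_width b : Lam b = (width b * p)%N.
Proof. by rewrite divnK. Qed.

Lemma branch_row_split b r q s : (s < p)%N ->
  branch_row b r (q * p + s) =
  ((q %/ width b)%N == r)%:R * ((zeta p ^+ g b) ^+ s * (zeta (width b) ^+ h b) ^+ q)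
  / sqrtC (Lam b)%:R.
Proof.
move=> s_lt; have qps : ((q * p + s) %/ p)%N = q by rewrite divnMDl // divn_small // addn0.
have qdiv : ((q * p + s) %/ Lam b)%N = (q %/ width b)%N.
  by rewrite [in LHS]Lam_width (mulnC (width b)) divnMA qps.
rewrite /branch_row /phase qdiv qps -!exprM (mulnC (h b)) mulnDr exprD mulnA exprM.
by rewrite -exprM mulnC exprM (prim_expr_order (primitive_prim_root F p_gt0)) expr1n mul1r.
Qed.

Lemma norm_phase b j : `|phase b j| = 1.
Proof.
have norm_zeta n : (0 < n)%N -> `|zeta n| = 1.
  by move=> n_gt0; apply: (norm_unity_root n_gt0); apply/prim_expr_order/primitive_prim_root.
by rewrite normrM !normrX !norm_zeta ?width_gt0 // !expr1n mulr1.
Qed.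

Lemma norm_branch_row b r j :
  `|branch_row b r j| ^+ 2 = ((j %/ Lam b)%N == r)%:R / (Lam b)%:R.
Proof.
rewrite /branch_row normrM normfV normrM norm_phase mulr1 normr_nat.
rewrite ger0_norm ?sqrtC_ge0 ?ler0n // expr_div_n sqrtCK.
by case: (_ == r); rewrite ?expr0n ?expr1n.
Qed.

Lemma branch_row_dotE b b' r r' :
  \sum_(j < N) branch_row b r j * (branch_row b' r' j)^* =
  (g b == g b')%:R * p%:R * \sum_(q < N %/ p)
    ((q %/ width b)%N == r)%:R * ((q %/ width b')%N == r')%:R
    * (zeta (width b) ^+ h b * (zeta (width b') ^+ h b')^*) ^+ q
    / (sqrtC (Lam b)%:R * (sqrtC (Lam b')%:R)^*).
Proof.
have Np : N = (N %/ p * p)%N by rewrite divnK // (dvdn_trans (p_dvd b) (Lam_dvdN b)).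
rewrite [in LHS]Np (sum_ord_mul _ _ (fun j => branch_row b r j * (branch_row b' r' j)^*)).
rewrite mulr_sumr; apply: eq_bigr => q _.
set A := zeta p ^+ g b * (zeta p ^+ g b')^*; set Y := _ / _.
rewrite (eq_bigr (fun s : 'I_p => A ^+ s * Y)) => [|s _].
  by rewrite -mulr_suml sum_prim_root_mulJ ?primitive_prim_root.
rewrite !branch_row_split // /A /Y.
by rewrite !(rmorphM, rmorph_nat, fmorphV, rmorphXn) !exprMn invfM; ring.
Qed.

Lemma branch_row_dot b b' r r' : (r < N %/ Lam b)%N -> (r' < N %/ Lam b')%N ->
  \sum_(j < N) branch_row b r j * (branch_row b' r' j)^* = ((b == b') && (r == r'))%:R.
Proof.
move=> r_lt r'_lt; rewrite branch_row_dotE.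
have [g_eq|g_neq] := eqVneq (g b) (g b'); last first.
  have /negPf -> : b != b' by apply: contraNneq g_neq => ->.
  by rewrite mulr0n !mul0r.
have [Lam_eq h_inj] := labelling g_eq.
have h_eq : (h b == h b') = (b == b') by apply/eqP/eqP => [/h_inj|->].
have hb'_lt : (h b' < width b)%N by rewrite Lam_eq.
have Nw : (N %/ p = N %/ Lam b * width b)%N.
  by rewrite -{1}(divnK (Lam_dvdN b)) Lam_width mulnA !mulnK.
rewrite mulr1n mul1r -Lam_eq sqrtC_mulJ ?ler0n // Nw.
set W := _ * _^*; rewrite (eq_bigr (fun q : 'I__ =>
  (r == r')%:R / (Lam b)%:R * (((q %/ width b)%N == r)%:R * W ^+ q))) => [|q _].
  have z_prim := primitive_prim_root F (width_gt0 b).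
  rewrite -mulr_sumr sum_block_expr ?(prim_root_mulJ_eq1 z_prim) //; last first.
    exact/unity_root_mulJ/prim_expr_order.
  have LamR : (Lam b)%:R = (width b)%:R * p%:R :> F by rewrite -natrM -Lam_width.
  rewrite h_eq -mulnb natrM LamR; field.
  by rewrite !pnatr_eq0 -!lt0n p_gt0 width_gt0.
have [->|_] := eqVneq (q %/ width b)%N r; last by rewrite !mul0r mulr0.
by rewrite !mulr1n !mul1r mulrAC.
Qed.

Definition branch_offset b := (\sum_(k < l | (k < b)%N) N %/ Lam k)%N.

Hypothesis sum_widths : (\sum_b N %/ Lam b)%N = N.

Local Notation blocks i := (cast_ord (esym sum_widths) i).

Definition branch_of (i : 'I_N) : 'I_l := tagnat.sig1 (blocks i).

Definition branch_rank (i : 'I_N) : 'I_(N %/ Lam (branch_of i)) := tagnat.sig2 (blocks i).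

Lemma branch_ofE i : val i = (branch_offset (branch_of i) + branch_rank i)%N.
Proof.
have := congr1 (@nat_of_ord _) (tagnat.sig2K (blocks i)).
by rewrite /tagnat.Rank tagnat.rankEsum /= => ->.
Qed.

Lemma eq_branch i i' :
  (i == i') = (branch_of i == branch_of i') && (branch_rank i == branch_rank i' :> nat).
Proof.
by rewrite /branch_rank /branch_of -tagnat.eq_Rank !tagnat.sig2K -!val_eqE.
Qed.

Definition branch_mx : 'M[F]_N :=
  \matrix_(i, j) branch_row (branch_of i) (branch_rank i) j.

Lemma branch_mx_unitary : branch_mx *m (map_mx Num.conj branch_mx)^T = 1%:M.
Proof.
apply/matrixP => i i'; rewrite !mxE eq_branch -branch_row_dot ?ltn_ord //.
by apply: eq_bigr => j _; rewrite !mxE.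
Qed.

Lemma norm_branch_mx i j : `|branch_mx i j| ^+ 2 =
  ((j %/ Lam (branch_of i))%N == branch_rank i)%:R / (Lam (branch_of i))%:R.
Proof. by rewrite mxE norm_branch_row. Qed.

End BranchRows.

Section TransitionMatrix.
Local Open Scope classical_set_scope.
Variable R : realType.

Lemma lebesgue_measure_finite_diff (S Y : set R) :
  measurable Y -> Y `<=` S -> finite_set (S `\` Y) ->
  lebesgue_measure S = lebesgue_measure Y.
Proof.
move=> mY YS /finite_set_countable SY; rewrite -(setDUK YS) measureU0 //.
  by apply: countable_measurable => // t; exact: measurable_set1.
exact: countable_lebesgue_measure0.
Qed.

Lemma natr_div_scale x y z : (0 < z)%N -> x%:R / y%:R = (x * z)%:R / (y * z)%:R :> R.
Proof. by move=> z_gt0; rewrite !natrM invfM mulrACA divff ?mulr1 // pnatr_eq0 -lt0n. Qed.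

Lemma ler_nat_div (D : R) m n : 0 < D -> (m%:R / D <= n%:R / D) = (m <= n)%N.
Proof. by move=> D_gt0; rewrite ler_pM2r ?invr_gt0 // ler_nat. Qed.

Lemma ltr_nat_div (D : R) m n : 0 < D -> (m%:R / D < n%:R / D) = (m < n)%N.
Proof. by move=> D_gt0; rewrite ltr_pM2r ?invr_gt0 // ltr_nat. Qed.

Variables (T : R -> R) (l : nat) (Lam : 'I_l -> nat) (N : nat) (b : 'I_l) (A r : nat).
Hypotheses (hT : condition1 T Lam) (left_endE : left_end R Lam b = A%:R / N%:R).
Hypothesis r_lt : (r < N %/ Lam b)%N.

Let Lam_gt0 : (0 < Lam b)%N.
Proof. by case: hT => Lam_ge2 _ _ _; apply: leq_trans (Lam_ge2 b). Qed.

Let N_gt0 : (0 < N)%N.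
Proof.
by have := leq_ltn_trans (leq0n r) r_lt; rewrite divn_gt0 // => /(leq_trans Lam_gt0).
Qed.

Let grid_gt0 : 0 < (N * Lam b)%:R :> R.
Proof. by rewrite ltr0n muln_gt0 N_gt0. Qed.

Local Notation grid k := (k%:R / (N * Lam b)%:R : R).
Local Notation e1 := (grid ((A + r) * Lam b)).
Local Notation e2 := (grid ((A + r).+1 * Lam b)).

Lemma T_cell_affine x : e1 < x < e2 -> T x = (Lam b)%:R * (x - grid (A * Lam b)).
Proof.
case: hT => _ _ _ T_affine /andP[x_gt x_lt].
rewrite -(natr_div_scale _ _ Lam_gt0) -left_endE; apply: T_affine.
have -> : ((Lam b)%:R)^-1 = grid N.
  by rewrite natrM invfM mulrA divff ?mul1r // pnatr_eq0 -lt0n.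
rewrite left_endE (natr_div_scale _ _ Lam_gt0) -mulrDl -natrD; apply/andP; split.
  by apply: le_lt_trans x_gt; rewrite ler_nat_div // leq_mul2r leq_addr orbT.
apply: lt_le_trans x_lt _; rewrite ler_nat_div // -addnS mulnDl leq_add2l.
by rewrite -leq_divRL.
Qed.

Lemma preimage_cell_branch j x : e1 < x < e2 ->
  cell N j (T x) <-> grid (A * Lam b + j) <= x <= grid (A * Lam b + j.+1).
Proof.
have cellE k : k%:R / N%:R = (Lam b)%:R * (grid (A * Lam b + k) - grid (A * Lam b)).
  rewrite natrD mulrDl addrAC subrr add0r natrM; field.
  by rewrite !pnatr_eq0 -!lt0n N_gt0 Lam_gt0.
move=> x_in; rewrite /cell /= in_itv /= (T_cell_affine x_in) !cellE.
by rewrite !ler_pM2l ?ltr0n // !lerD2r.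
Qed.

Variables (i j : 'I_N).
Hypothesis iE : val i = (A + r)%N.

Local Notation lo := (grid (A * Lam b + j)).
Local Notation hi := (grid (A * Lam b + j.+1)).
Local Notation cell_preim := (cell N i `&` T @^-1` cell N j).

Lemma cell_branchE : cell N i = `[e1, e2].
Proof.
by rewrite /cell iE (natr_div_scale (A + r) N Lam_gt0) (natr_div_scale (A + r).+1 N Lam_gt0).
Qed.

Lemma mem_cell_preim x : e1 < x < e2 -> cell_preim x <-> lo <= x <= hi.
Proof.
move=> x_in; rewrite -(preimage_cell_branch j x_in); split => [[] //|Tx]; split => //.
by move/andP: x_in => [/ltW x_ge /ltW x_le]; rewrite cell_branchE /= in_itv /= x_ge x_le.
Qed.

Lemma cell_preimP x : cell_preim x ->
  [\/ x = e1, x = e2 | e1 < x < e2 /\ lo <= x <= hi].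
Proof.
move=> preim_x; have [+ _] := preim_x; rewrite cell_branchE /= in_itv /=.
rewrite (le_eqVlt e1) (le_eqVlt x e2).
case/andP => /predU1P[<-|e1_x]; first by constructor.
case/predU1P => [->|x_e2]; first by constructor.
have x_in : e1 < x < e2 by rewrite e1_x x_e2.
by apply: Or33; split; last exact/(mem_cell_preim x_in).
Qed.

Lemma block_cellE : ((j %/ Lam b)%N == r) = (e1 <= lo) && (hi <= e2).
Proof.
rewrite !ler_nat_div // -addnS !mulnDl !leq_add2l.
by rewrite eqn_leq -ltnS ltn_divLR // leq_divRL // andbC.
Qed.

Lemma measure_cell_preim_block : e1 <= lo -> hi <= e2 ->
  lebesgue_measure cell_preim = (grid 1)%:E.
Proof.
move=> e1_lo hi_e2; have lo_hi : lo < hi by rewrite ltr_nat_div // addnS.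
rewrite (@lebesgue_measure_finite_diff _ `]lo, hi[) ?lebesgue_measure_itv /= ?lte_fin ?lo_hi.
- by rewrite -EFinD -mulrBl -natrB ?leq_add2l // subnDl subSnn.
- exact: measurable_itv.
- move=> x; rewrite /= in_itv /= => /andP[lo_x x_hi]; apply/mem_cell_preim; last by rewrite !ltW.
  by rewrite (le_lt_trans e1_lo lo_x) (lt_le_trans x_hi hi_e2).
apply: (@sub_finite_set _ _ ([set e1; e2] `|` [set lo; hi])); last first.
  by rewrite finite_setU; split; exact: finite_set2.
move=> x [/cell_preimP[->|->|[_]]]; [by left; left | by left; right |].
rewrite /= in_itv /= !le_eqVlt => /andP[/predU1P[->|lo_x] /predU1P[->|x_hi]];
  by [right; left | right; right | right; right | rewrite lo_x x_hi].
Qed.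

Lemma measure_cell_preim_off : ~~ ((e1 <= lo) && (hi <= e2)) ->
  lebesgue_measure cell_preim = 0%E.
Proof.
move=> not_block; rewrite (@lebesgue_measure_finite_diff _ set0) ?measure0 //.
apply: (sub_finite_set _ (finite_set2 e1 e2)).
move=> x [/cell_preimP[->|->|[/andP[e1_x x_e2] /andP[lo_x x_hi]]] _]; [by left | by right |].
move: not_block; rewrite negb_and -!ltNge !ltr_nat_div // => /orP[j_lt|j_gt].
  have hi_e1 : hi <= e1 by rewrite ler_nat_div // addnS.
  by have := lt_le_trans e1_x (le_trans x_hi hi_e1); rewrite ltxx.
have e2_lo : e2 <= lo by rewrite ler_nat_div // -ltnS -[X in (_ < X)%N]addnS.
by have := le_lt_trans (le_trans e2_lo lo_x) x_e2; rewrite ltxx.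
Qed.

Lemma Bmat_branch : Bmat T i j = ((j %/ Lam b)%N == r)%:R / (Lam b)%:R.
Proof.
rewrite /Bmat block_cellE; have [/andP[e1_lo hi_e2]|not_block] := boolP (_ && _).
  rewrite (measure_cell_preim_block e1_lo hi_e2) /= natrM mulr1n.
  by field; rewrite !pnatr_eq0 -!lt0n N_gt0 Lam_gt0.
by rewrite (measure_cell_preim_off not_block) /= !mul0r.
Qed.

End TransitionMatrix.

Lemma unitary_trmx (R : rcfType) n (U : 'M[R[i]]_n) :
  U *m (map_mx Num.conj U)^T = 1%:M -> unitary_mx U^T.
Proof.
move=> U_unitary; rewrite /unitary_mx -map_trmx trmxK.
by rewrite -[RHS]trmx1 -(mulmx1C U_unitary) trmx_mul trmxK.
Qed.

Lemma sum_widths_eq (F : numFieldType) l (Lam : 'I_l -> nat) N :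
  \sum_b ((Lam b)%:R)^-1 = 1 :> F -> (forall b, Lam b %| N)%N -> (\sum_b N %/ Lam b)%N = N.
Proof.
move=> sum1 Lam_dvdN; apply/eqP; rewrite -(eqr_nat F) natr_sum; apply/eqP.
transitivity (N%:R * \sum_b ((Lam b)%:R)^-1 : F); last by rewrite sum1 mulr1.
by rewrite mulr_sumr; apply: eq_bigr => b _; rewrite natf_div.
Qed.

Lemma left_end_offset (R : realType) l (Lam : 'I_l -> nat) N b :
  (forall k, Lam k %| N)%N -> (0 < N)%N ->
  left_end R Lam b = (branch_offset Lam N b)%:R / N%:R.
Proof.
move=> Lam_dvdN N_gt0; rewrite /left_end /branch_offset natr_sum mulr_suml.
apply: eq_bigr => k _; rewrite natf_div ?Lam_dvdN // mulrAC divff ?mul1r //.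
by rewrite pnatr_eq0 -lt0n.
Qed.

Lemma branch_offset_le l (Lam : 'I_l -> nat) N (b : 'I_l) :
  (branch_offset Lam N b + N %/ Lam b <= \sum_k N %/ Lam k)%N.
Proof.
rewrite [X in (_ <= X)%N](bigID (fun k : 'I_l => (k < b)%N)) leq_add2l.
by rewrite (bigD1 b) ?ltnn //= leq_addr.
Qed.

Lemma condition2_pow2 (R : realType) l (Lam : 'I_l -> nat) M :
  \sum_b ((Lam b)%:R)^-1 = 1 :> R -> (0 < M)%N -> (forall b, Lam b %| M)%N ->
  condition2 R Lam (fun k => M * 2 ^ k)%N.
Proof.
move=> sum1 M_gt0 Lam_dvdM; split; first by rewrite expn0 muln1.
split=> [k|b]; first by rewrite expnS mulnCA dvdn_mull // mulnK // muln_gt0 M_gt0 expn_gt0.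
have offset_le := branch_offset_le Lam M b.
rewrite (sum_widths_eq sum1 Lam_dvdM) in offset_le.
rewrite expn0 muln1 (left_end_offset _ _ Lam_dvdM) //; split.
  by exists (branch_offset Lam M b); split => //; apply: leq_trans offset_le; apply: leq_addr.
exists (branch_offset Lam M b + M %/ Lam b)%N; split => //.
by rewrite natrD mulrDl natf_div // mulrAC divff ?mul1r // pnatr_eq0 -lt0n.
Qed.

Lemma exists_unitary_Bmat (R : realType) (T : R -> R) l (Lam : 'I_l -> nat) p
    (g h : 'I_l -> nat) N :
  condition1 T Lam -> (0 < p)%N -> (forall b, p %| Lam b)%N ->
  (forall b, g b < p)%N -> (forall b, h b < Lam b %/ p)%N ->
  (forall b b', g b = g b' -> Lam b = Lam b' /\ (h b = h b' -> b = b')) ->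
  (forall b, Lam b %| N)%N ->
  exists U : 'M[R[i]]_N, unitary_mx U /\
    forall i j, (Complex (Bmat T i j) 0 : R[i]) = `|U j i| ^+ 2.
Proof.
move=> hT p_gt0 p_dvd g_lt h_lt labelling Lam_dvdN; have [Lam_ge2 sum1 _ _] := hT.
have Lam_gt0 b : (0 < Lam b)%N by apply: leq_trans (Lam_ge2 b).
have sum_widths := sum_widths_eq sum1 Lam_dvdN.
exists (branch_mx R[i] p g h sum_widths)^T; split.
  exact/unitary_trmx/branch_mx_unitary.
move=> i j; have N_gt0 : (0 < N)%N by apply: leq_ltn_trans (ltn_ord i).
rewrite mxE norm_branch_mx // (Bmat_branch hT (left_end_offset _ _ Lam_dvdN N_gt0)
  (ltn_ord (branch_rank sum_widths i)) j (branch_ofE sum_widths i)).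
by rewrite complexr0 rmorphM fmorphV !rmorph_nat.
Qed.

Theorem theorem4 (R : realType) (T : R -> R) (l : nat) (Lam : 'I_l -> nat)
  (hT : condition1 T Lam)
  (p : nat) (ell : nat) (Lbar : 'I_ell -> nat)
  (hp : (0 < p)%N)
  (hLbar_pos : forall i, (0 < Lbar i)%N)
  (hLbar_incr : forall i j : 'I_ell, (i < j)%N -> (Lbar i < Lbar j)%N)
  (hLbar_coprime : forall i j : 'I_ell, i != j -> coprime (Lbar i) (Lbar j))
  (hvals : (forall j : 'I_l, exists i : 'I_ell, Lam j = (p * Lbar i)%N) /\
           (forall i : 'I_ell, exists j : 'I_l, Lam j = (p * Lbar i)%N)) :
  quantizable T Lam.
Proof.
(* Neither the ordering [hLbar_incr] nor the surjectivity [hvals.2] is needed. *)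
have [Lam_ge2 sum1 _ _] := hT.
have [g [h [g_lt h_lt labelling]]] :=
  slope_labelling sum1 hp hLbar_pos hLbar_coprime hvals.1.
have p_dvd b : (p %| Lam b)%N by have [i ->] := hvals.1 b; apply: dvdn_mulr.
pose M := (\prod_b Lam b)%N.
have Lam_dvdM b : (Lam b %| M)%N by rewrite /M (bigD1 b) //= dvdn_mulr.
have M_gt0 : (0 < M)%N by rewrite prodn_gt0 // => b; apply: leq_trans (Lam_ge2 b).
exists (fun k => M * 2 ^ k)%N; split; first exact: condition2_pow2.
move=> k; apply: exists_unitary_Bmat hT hp p_dvd g_lt h_lt labelling _ => b.
exact: dvdn_mulr.
Qed.
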